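(* Let $k$ be an algebraically closed field, $\ell$ a non-trivial extension field of $k$, and $V,W$ be $k$-vector spaces. Suppose there exist $k$-linear maps $f,g\colon V\to W$ such that for every pair of scalars $\lambda,\mu\in\ell$, not both zero, the map $\operatorname{Hom}_k(\lambda,f)+\operatorname{Hom}_k(\mu,g)\colon\operatorname{Hom}_k(\ell,V)\to\operatorname{Hom}_k(\ell,W)$ is an isomorphism. Then $V=0=W$.
   Context: Here $\lambda$ and $\mu$ denote the $k$-linear maps $\ell\to\ell$ given by multiplication by $\lambda$ and $\mu$, so $\operatorname{Hom}_k(\lambda,f)$ sends $h\colon\ell\to V$ to $f\circ h\circ(\lambda\cdot-)$. *)

From HB Require Import structures.
From mathcomp Require Import all_boot all_algebra.
Set Implicit Arguments. Unset Strict Implicit. Unset Printing Implicit Defensive.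
Import GRing.Theory.
Local Open Scope ring_scope.

(* An extension field L of k is given by a (necessarily injective) ring
   morphism iota : k -> L; L is a k-vector space via a *: x := iota a * x. *)

Definition klinear (k : fieldType) (L : fieldType) (iota : {rmorphism k -> L})
  (V : lmodType k) (h : L -> V) : Prop :=
  (forall x y : L, h (x + y) = h x + h y) /\
  (forall (a : k) (x : L), h (iota a * x) = a *: h x).

(* Hom_k(lambda, f) + Hom_k(mu, g) applied to h : h |-> f o h o (lambda * -)
   + g o h o (mu * -). *)
Definition homPair (k : fieldType) (L : fieldType) (V W : lmodType k)
  (lam mu : L) (f g : V -> W) (h : L -> V) : L -> W :=
  fun x => f (h (lam * x)) + g (h (mu * x)).

(* The map is an isomorphism Hom_k(L,V) -> Hom_k(L,W): it is (automatically
   k-linear and) bijective between these spaces of k-linear maps. *)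
Definition homPair_iso (k : fieldType) (L : fieldType) (iota : {rmorphism k -> L})
  (V W : lmodType k) (lam mu : L) (f g : V -> W) : Prop :=
  (forall h1 h2 : L -> V, klinear iota h1 -> klinear iota h2 ->
     homPair lam mu f g h1 =1 homPair lam mu f g h2 -> h1 =1 h2) /\
  (forall h' : L -> W, klinear iota h' ->
     exists h : L -> V, klinear iota h /\ homPair lam mu f g h =1 h').

From HB Require Import structures.
From mathcomp Require Import all_boot all_algebra.
From mathcomp Require Import boolp classical_sets ring.
Set Implicit Arguments. Unset Strict Implicit. Unset Printing Implicit Defensive.
Import GRing.Theory.
Local Open Scope ring_scope.
Local Open Scope classical_set_scope.

(* Since k is algebraically closed, an element m of L outside k is
   transcendental over k, and every nonzero polynomial in m is a product of
   factors m - c.  Testing the hypothesis on the maps y |-> phi y *: v, for a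
   k-linear phi : L -> k with phi 1 = 1, shows that a f + b g : V -> W is onto
   whenever (a, b) != 0; in particular g and every f - c g are onto.  Given v,
   choose v_0 = v, v_1, v_2, ... with g v_(n+1) = f v_n.
   Zorn's lemma, applied to graphs of partial k-linear maps h : L -> V with
   f (h y) = g (h (m y)) that extend p(m) |-> sum_i p_i v_i, yields a total
   such h: a maximal domain is closed under division by every m - c (the
   surjectivity of f - c g provides a value at y / (m - c)), hence by every
   nonzero polynomial in m, so it could otherwise be enlarged by k[m] y0
   mapped to 0.  Such an h is in the kernel of Hom(1, f) + Hom(-m, g), so
   v = h 1 = 0, and then W = g V = 0.  The functional phi is obtained by the
   same extension argument with f = g = 0. *)

Lemma Zorn_bigcup_above T (P : set (set T)) (A0 : set T) :
  P A0 ->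
  (forall F : set (set T), F `<=` P -> F !=set0 -> total_on F subset ->
    P (\bigcup_(X in F) X)) ->
  exists A, [/\ P A, A0 `<=` A & forall B, A `<` B -> ~ P B].
Proof.
move=> PA0 Pchain.
have [|A [PA maxA]] := @Zorn_bigcup T [set B | P (A0 `|` B)].
  move=> F FP Ftot /=; pose G := [set A0] `|` [set A0 `|` X | X in F].
  have -> : A0 `|` \bigcup_(X in F) X = \bigcup_(Y in G) Y.
    apply/seteqP; split => [t [A0t|[X FX Xt]]|t [Y [->|[X FX <-]] Yt]].
    - by exists A0 => //; left.
    - by exists (A0 `|` X); [right; exists X | right].
    - by left.
    - by case: Yt => [|Xt]; [left | right; exists X].
  apply: Pchain; first by move=> Y [->|[X FX <-]] //; exact: FP.
    by exists A0; left.
  move=> Y Z [->|[X FX <-]] [->|[X' FX' <-]].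
  - by left.
  - by left; exact: subsetUl.
  - by right; exact: subsetUl.
  - by have [XX'|X'X] := Ftot _ _ FX FX'; [left|right]; apply: setUS.
exists (A0 `|` A); split; [exact: PA | exact: subsetUl |].
move=> B [AB BA] PB; apply: (maxA B).
  split; first by apply: subset_trans AB; exact: subsetUr.
  by move=> BsubA; apply: BA; apply: subset_trans BsubA _; exact: subsetUr.
by rewrite /= ((setUidPr _ _).2 (subset_trans (@subsetUl _ A0 A) AB)).
Qed.

Section LinearGraphs.
Variables (k L : fieldType) (iota : {rmorphism k -> L}) (X : lmodType k).
Implicit Types (A S : set (L * X)) (y z : L) (x w : X).

Definition linear_graph A :=
  [/\ A (0, 0),
      forall y x y' x', A (y, x) -> A (y', x') -> A (y + y', x + x')
    & forall a y x, A (y, x) -> A (iota a * y, a *: x)].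

Definition functional_graph A := forall x, A (0, x) -> x = 0.

Definition graph_dom A : set L := [set y | exists x, A (y, x)].

Definition graph_sum A S : set (L * X) :=
  [set (u.1 + v.1, u.2 + v.2) | u in A & v in S].

Definition line_graph z w : set (L * X) := [set (iota a * z, a *: w) | a in setT].

Lemma linear_graphN A y x : linear_graph A -> A (y, x) -> A (- y, - x).
Proof.
by case=> _ _ AZ /(AZ (-1)); rewrite rmorphN1 mulN1r scaleN1r.
Qed.

Lemma functional_graph_eq A y x x' : linear_graph A -> functional_graph A ->
  A (y, x) -> A (y, x') -> x = x'.
Proof.
move=> Alin Afun Ax Ax'; apply/eqP; rewrite -subr_eq0; apply/eqP/Afun.
have [_ AD _] := Alin; rewrite -(subrr y); exact: AD (linear_graphN Alin Ax').
Qed.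

Lemma graph_dom0 A : linear_graph A -> graph_dom A 0.
Proof. by case=> A0 _ _; exists 0. Qed.

Lemma graph_domZ A a y : linear_graph A -> graph_dom A y -> graph_dom A (iota a * y).
Proof. by case=> _ _ AZ [x Ax]; exists (a *: x); apply: AZ. Qed.

Lemma graph_domZK A a y : linear_graph A -> a != 0 ->
  graph_dom A (iota a * y) -> graph_dom A y.
Proof.
move=> Alin a0 /(graph_domZ a^-1 Alin).
by rewrite mulrA -rmorphM mulVf // rmorph1 mul1r.
Qed.

Lemma graph_sum_linear A S : linear_graph A -> linear_graph S ->
  linear_graph (graph_sum A S).
Proof.
case=> A0 AD AZ [S0 SD SZ]; split.
- by exists (0, 0) => //; exists (0, 0); rewrite //= !addr0.
- move=> _ _ _ _ [[y x] Au [[y1 x1] Sv [<- <-]]] [[y' x'] Au' [[y1' x1'] Sv' [<- <-]]].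
  exists (y + y', x + x'); first exact: AD.
  exists (y1 + y1', x1 + x1'); first exact: SD.
  by rewrite /= addrACA [x + x1 + _]addrACA.
- move=> a _ _ [[y x] Au [[y1 x1] Sv [<- <-]]].
  exists (iota a * y, a *: x); first exact: AZ.
  by exists (iota a * y1, a *: x1); [exact: SZ | rewrite /= mulrDr scalerDr].
Qed.

Lemma graph_sum_functional A S :
  linear_graph A -> functional_graph A -> functional_graph S ->
  (forall y, graph_dom A y -> graph_dom S y -> y = 0) ->
  functional_graph (graph_sum A S).
Proof.
move=> Alin Afun Sfun AS0 _ [[y x] Ax [[y' x'] Sx' /= [yy' <-]]].
have y'0 : y' = 0.
  apply: AS0; last by exists x'.
  have -> : y' = - y by apply: (addrI y); rewrite yy' subrr.
  by exists (- x); exact: linear_graphN.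
move: yy' Sx'; rewrite y'0 addr0 => y0 /Sfun ->; move: Ax; rewrite y0 => /Afun ->.
by rewrite addr0.
Qed.

Lemma graph_sum_subl A S : S (0, 0) -> A `<=` graph_sum A S.
Proof. by move=> S0 [y x] Ax; exists (y, x) => //; exists (0, 0); rewrite //= !addr0. Qed.

Lemma graph_sum_subr A S : A (0, 0) -> S `<=` graph_sum A S.
Proof. by move=> A0 [y x] Sx; exists (0, 0) => //; exists (y, x); rewrite //= !add0r. Qed.

Lemma line_graph_linear z w : linear_graph (line_graph z w).
Proof.
split.
- by exists 0 => //; rewrite rmorph0 mul0r scale0r.
- move=> _ _ _ _ [a _ [<- <-]] [b _ [<- <-]].
  by exists (a + b); rewrite // rmorphD mulrDl scalerDl.
- by move=> b _ _ [a _ [<- <-]]; exists (b * a); rewrite // rmorphM mulrA scalerA.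
Qed.

Lemma line_graph_functional z w : z != 0 -> functional_graph (line_graph z w).
Proof.
move=> z0 _ [a _ [/eqP + <-]].
by rewrite mulf_eq0 fmorph_eq0 (negbTE z0) orbF => /eqP->; rewrite scale0r.
Qed.

Lemma functional_graph_fun A : linear_graph A -> functional_graph A ->
  (forall y, graph_dom A y) -> exists h : L -> X, klinear iota h /\ forall y, A (y, h y).
Proof.
move=> Alin Afun /choice[h Ah]; exists h; split => //.
have [_ AD AZ] := Alin; split => [y z|a y].
- exact: functional_graph_eq Alin Afun (Ah _) (AD _ _ _ _ (Ah y) (Ah z)).
- exact: functional_graph_eq Alin Afun (Ah _) (AZ a _ _ (Ah y)).
Qed.

End LinearGraphs.

Section Transcendental.
Variables (k : closedFieldType) (L : fieldType) (iota : {rmorphism k -> L}) (m : L).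
Hypothesis m_notin : forall a, iota a != m.

Fact commr_rmorph_m : commr_rmorph iota m.
Proof. by move=> a; exact: mulrC. Qed.

Local Notation peval := (horner_morph commr_rmorph_m).

Lemma closed_peval_mulK (D : set L) p y :
  (forall a y, D y -> D (iota a * y)) ->
  (forall c y, D y -> D (y / (m - iota c))) ->
  p != 0 -> D (peval p * y) -> D y.
Proof.
move=> DZ Ddiv p0; have [s ->] := closed_field_poly_normal p.
rewrite -mul_polyC rmorphM /= horner_morphC rmorph_prod /= -mulrA.
move=> /(DZ (lead_coef p)^-1); rewrite fmorphV mulKf ?fmorph_eq0 ?lead_coef_eq0 //.
elim: s => [|c s IHs]; first by rewrite big_nil mul1r.
rewrite big_cons rmorphB /= horner_morphX horner_morphC -mulrA => /(Ddiv c).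
by rewrite mulrC mulKf ?subr_eq0 1?eq_sym //; exact: IHs.
Qed.

Lemma horner_morph_eq0 p : (peval p == 0) = (p == 0).
Proof.
apply/eqP/eqP => [p0|->]; last exact: rmorph0.
apply/eqP; apply: contraT => nz_p; rewrite -(oner_eq0 L).
apply/eqP; apply: (@closed_peval_mulK [set 0] p 1 _ _ nz_p) => [a y|c y|] /=.
- by move->; rewrite mulr0.
- by move->; rewrite mul0r.
- by rewrite mulr1 p0.
Qed.

End Transcendental.

Section Intertwining.
Variables (k L : fieldType) (iota : {rmorphism k -> L}) (m : L).
Variables (X Y : lmodType k) (F G : {linear X -> Y}).
Implicit Types (A S : set (L * X)).

Definition intertwining A :=
  forall y x, A (y, x) -> exists2 x', A (m * y, x') & F x = G x'.

Lemma graph_sum_intertwining A S : intertwining A -> intertwining S ->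
  intertwining (graph_sum A S).
Proof.
move=> Aint Sint _ _ [[y x] /Aint[x1 Ax1 Fx] [[y' x'] /Sint[x1' Sx1' Fx'] [<- <-]]].
exists (x1 + x1'); last by rewrite /= !linearD Fx Fx'.
by exists (m * y, x1) => //; exists (m * y', x1'); rewrite //= mulrDr.
Qed.

Lemma line_extension_intertwining A y x z w c :
  linear_graph iota A -> intertwining A -> A (y, x) ->
  m * z = y + iota c * z -> F w = G x + c *: G w ->
  intertwining (graph_sum A (line_graph iota z w)).
Proof.
move=> [_ AD AZ] Aint Ax mz Fw _ _ [[y' x'] Ay' [_ [a _ <-] [<- <-]]] /=.
have [x'' Ax'' Fx'] := Aint _ _ Ay'.
exists (x'' + a *: x + (a * c) *: w).
  exists (m * y' + iota a * y, x'' + a *: x); first exact/AD/AZ.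
  exists (iota (a * c) * z, (a * c) *: w); first by exists (a * c).
  by rewrite /= mulrDr mulrCA mz rmorphM mulrDr mulrA addrA.
by rewrite !linearD !linearZ /= Fx' Fw scalerDr scalerA addrA.
Qed.

End Intertwining.

Section PolynomialGraph.
Variables (k : closedFieldType) (L : fieldType) (iota : {rmorphism k -> L}) (m : L).
Hypothesis m_notin : forall a, iota a != m.
Variables (X Y : lmodType k) (F G : {linear X -> Y}) (e : nat -> X).
Hypothesis Fe : forall n, F (e n) = G (e n.+1).

Local Notation peval := (horner_morph (commr_rmorph_m iota m)).

Definition poly_combination (p : {poly k}) : X := \sum_(i < size p) p`_i *: e i.
Local Notation E := poly_combination.

Lemma poly_combination_widen (p : {poly k}) n :
  (size p <= n)%N -> E p = \sum_(i < n) p`_i *: e i.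
Proof.
move=> pn; rewrite /E (big_ord_widen n (fun i => p`_i *: e i) pn) big_mkcond.
apply: eq_bigr => i _; case: ltnP => // /(nth_default 0) ->.
by rewrite scale0r.
Qed.

Lemma poly_combinationD (p q : {poly k}) : E (p + q) = E p + E q.
Proof.
have le_p : (size p <= size p + size q)%N by exact: leq_addr.
have le_q : (size q <= size p + size q)%N by exact: leq_addl.
have le_pq : (size (p + q)%R <= size p + size q)%N.
  by rewrite (leq_trans (size_polyD _ _)) // geq_max le_p le_q.
rewrite (poly_combination_widen le_pq) (poly_combination_widen le_p).
rewrite (poly_combination_widen le_q).
by rewrite -big_split; apply: eq_bigr => i _; rewrite coefD scalerDl.
Qed.

Lemma poly_combinationZ a (p : {poly k}) : E (a *: p) = a *: E p.
Proof.
rewrite (poly_combination_widen (size_scale_leq a p)) scaler_sumr.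
by apply: eq_bigr => i _; rewrite coefZ scalerA.
Qed.

Lemma poly_combination0 : E 0 = 0.
Proof. by rewrite /E size_poly0 big_ord0. Qed.

Lemma poly_combination1 : E 1 = e 0.
Proof. by rewrite /E size_poly1 big_ord1 coef1 scale1r. Qed.

Lemma poly_combination_intertwining (p : {poly k}) : F (E p) = G (E ('X * p)).
Proof.
have leXp : (size ('X * p)%R <= (size p).+1)%N.
  by rewrite (leq_trans (size_polyMleq _ _)) // size_polyX; case: (size p).
rewrite (poly_combination_widen leXp) big_ord_recl coefXM scale0r add0r.
by rewrite !linear_sum; apply: eq_bigr => i _; rewrite coefXM !linearZ /= Fe.
Qed.

Definition poly_graph (y0 : L) : set (L * X) := [set (peval p * y0, E p) | p in setT].

Lemma poly_graph_linear y0 : linear_graph iota (poly_graph y0).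
Proof.
split.
- by exists 0 => //; rewrite rmorph0 mul0r poly_combination0.
- move=> _ _ _ _ [p _ [<- <-]] [q _ [<- <-]].
  by exists (p + q); rewrite // rmorphD mulrDl poly_combinationD.
- move=> a _ _ [p _ [<- <-]]; exists (a *: p) => //.
  by rewrite -mul_polyC rmorphM /= horner_morphC mulrA mul_polyC poly_combinationZ.
Qed.

Lemma poly_graph_functional y0 : y0 != 0 -> functional_graph (poly_graph y0).
Proof.
move=> y0_neq0 _ [p _ [/eqP + <-]]; rewrite mulf_eq0 (negbTE y0_neq0) orbF.
by rewrite horner_morph_eq0 // => /eqP->; exact: poly_combination0.
Qed.

Lemma poly_graph_intertwining y0 : intertwining m F G (poly_graph y0).
Proof.
move=> _ _ [p _ [<- <-]]; exists (E ('X * p)); last exact: poly_combination_intertwining.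
by exists ('X * p); rewrite // rmorphM /= horner_morphX mulrA.
Qed.

Lemma poly_extension A y0 :
  linear_graph iota A -> functional_graph A -> intertwining m F G A ->
  (forall c y, graph_dom A y -> graph_dom A (y / (m - iota c))) ->
  ~ graph_dom A y0 ->
  [/\ linear_graph iota (graph_sum A (poly_graph y0)),
      functional_graph (graph_sum A (poly_graph y0)),
      intertwining m F G (graph_sum A (poly_graph y0))
    & graph_sum A (poly_graph y0) (y0, e 0)].
Proof.
move=> Alin Afun Aint Adiv Ay0; split.
- exact: (graph_sum_linear Alin (poly_graph_linear y0)).
- apply: (graph_sum_functional Alin Afun).
    apply: poly_graph_functional; apply: contra_notN Ay0 => /eqP->.
    exact: graph_dom0 Alin.
  move=> y Ay [x [p _ [py0 _]]]; have [p0|nz_p] := eqVneq p 0.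
    by rewrite -py0 p0 rmorph0 mul0r.
  case: Ay0; apply: (closed_peval_mulK m_notin _ Adiv nz_p); last by rewrite py0.
  by move=> a u; exact: graph_domZ.
- exact: (graph_sum_intertwining Aint (@poly_graph_intertwining y0)).
- apply: graph_sum_subr; first by have [] := Alin.
  by exists 1; rewrite // rmorph1 mul1r poly_combination1.
Qed.

End PolynomialGraph.

Section MaximalGraph.
Variables (k : closedFieldType) (L : fieldType) (iota : {rmorphism k -> L}) (m : L).
Hypothesis m_notin : forall a, iota a != m.
Variables (X Y : lmodType k) (F G : {linear X -> Y}) (e : nat -> X).
Hypothesis Fe : forall n, F (e n) = G (e n.+1).
Hypothesis FG_surj : forall (x : X) (c : k), exists w, F w - c *: G w = G x.
Implicit Types (A B : set (L * X)).

Definition admissible A :=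
  [/\ linear_graph iota A, functional_graph A, intertwining m F G A & A (1, e 0)].

Lemma admissible_poly_graph1 : admissible (poly_graph iota m e 1).
Proof.
split; [exact: poly_graph_linear | exact/poly_graph_functional/oner_neq0 | |].
- exact: poly_graph_intertwining.
- by exists 1; rewrite // rmorph1 mul1r poly_combination1.
Qed.

Lemma admissible_bigcup (C : set (set (L * X))) :
  C `<=` admissible -> C !=set0 -> total_on C subset ->
  admissible (\bigcup_(A in C) A).
Proof.
move=> Cadm [A0 CA0] Ctot; have [[A0_0 _ _] _ _ A0_1] := Cadm _ CA0.
split; [split| | |]; first by exists A0.
- move=> y x y' x' [A CA Ax] [B CB By'].
  have [AB|BA] := Ctot _ _ CA CB.
  + by exists B => //; have [[_ BD _] _ _ _] := Cadm _ CB; exact: BD (AB _ Ax) By'.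
  + by exists A => //; have [[_ AD _] _ _ _] := Cadm _ CA; exact: AD Ax (BA _ By').
- move=> a y x [A CA Ax]; exists A => //.
  by have [[_ _ AZ] _ _ _] := Cadm _ CA; exact: AZ.
- by move=> x [A CA Ax]; have [_ Afun _ _] := Cadm _ CA; exact: Afun.
- move=> y x [A CA Ax]; have [_ _ Aint _] := Cadm _ CA.
  by have [x' Ax' Fx] := Aint _ _ Ax; exists x' => //; exists A.
- by exists A0.
Qed.

Section Maximal.
Variable A : set (L * X).
Hypothesis Aadm : admissible A.
Hypothesis Amax : forall B, A `<` B -> ~ admissible B.

Lemma maximal_graph_sub B : admissible B -> A `<=` B -> B `<=` A.
Proof. by move=> Badm AB; apply: contrapT => BA; exact: Amax (conj AB BA) Badm. Qed.

Lemma maximal_graph_div c y : graph_dom A y -> graph_dom A (y / (m - iota c)).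
Proof.
move=> [x Ax]; set z := y / (m - iota c); apply: contrapT => Az.
have [Alin Afun Aint A1] := Aadm; have [A0 _ _] := Alin.
have [w Fw] := FG_surj x c; have {}Fw : F w = G x + c *: G w by rewrite -Fw subrK.
have nz_z : z != 0 by apply: contra_notN Az => /eqP->; exact: graph_dom0 Alin.
have nz_mc : m - iota c != 0 by rewrite subr_eq0 eq_sym.
have mz : m * z = y + iota c * z by rewrite /z; field.
pose B := graph_sum A (line_graph iota z w).
have [L0 _ _] := line_graph_linear iota z w.
have Badm : admissible B.
  split; [exact: graph_sum_linear Alin (line_graph_linear _ _ _) | | |].
  - apply: (graph_sum_functional Alin Afun (line_graph_functional nz_z)).
    move=> u Au [_ [a _ [au _]]]; rewrite -au in Au *; have [->|nz_a] := eqVneq a 0.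
      by rewrite rmorph0 mul0r.
    by case: Az; exact: graph_domZK Alin nz_a Au.
  - exact: line_extension_intertwining Alin Aint Ax mz Fw.
  - exact: graph_sum_subl L0 _ A1.
case: Az; exists w; apply: (maximal_graph_sub Badm (graph_sum_subl L0)).
by apply: graph_sum_subr A0 _ _; exists 1 => //; rewrite rmorph1 mul1r scale1r.
Qed.

Lemma maximal_graph_total y : graph_dom A y.
Proof.
apply: contrapT => Ay; have [Alin Afun Aint A1] := Aadm.
pose e0 (n : nat) : X := 0.
have Fe0 n : F (e0 n) = G (e0 n.+1) by rewrite !linear0.
have [Blin Bfun Bint By] :=
  poly_extension m_notin Fe0 Alin Afun Aint maximal_graph_div Ay.
have AB : A `<=` graph_sum A (poly_graph iota m e0 y).
  by apply: graph_sum_subl; have [] := poly_graph_linear iota m e0 y.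
apply: Ay; exists (e0 0); apply: (maximal_graph_sub _ AB) By.
by split => //; exact: AB.
Qed.

End Maximal.

Theorem intertwiner_exists :
  exists h : L -> X, [/\ klinear iota h, h 1 = e 0 & forall y, F (h y) = G (h (m * y))].
Proof.
have [A [Aadm _ Amax]] := Zorn_bigcup_above admissible_poly_graph1 admissible_bigcup.
have [Alin Afun Aint A1] := Aadm.
have [h [hlin Ah]] := functional_graph_fun Alin Afun (maximal_graph_total Aadm Amax).
exists h; split => // [|y]; first exact: functional_graph_eq Alin Afun (Ah 1) A1.
have [x' Ax' ->] := Aint _ _ (Ah y).
by rewrite (functional_graph_eq Alin Afun Ax' (Ah (m * y))).
Qed.

End MaximalGraph.

Lemma unit_functional_exists (k : closedFieldType) (L : fieldType)
    (iota : {rmorphism k -> L}) (m : L) :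
  (forall a, iota a != m) -> exists phi : L -> k^o, klinear iota phi /\ phi 1 = 1.
Proof.
move=> m_notin; pose e (n : nat) : k^o := (n == 0)%:R.
have [//|x c|phi [philin phi1 _]] :=
  @intertwiner_exists _ _ iota m m_notin k^o k^o \0 \0 e; last by exists phi.
by exists 0; rewrite /= scaler0 subr0.
Qed.

Section KLinear.
Variables (k L : fieldType) (iota : {rmorphism k -> L}) (V : lmodType k).

Lemma klinear0 : klinear iota (fun=> 0 : V).
Proof. by split=> [x y|a x]; rewrite ?addr0 ?scaler0. Qed.

Lemma klinearN (h : L -> V) y : klinear iota h -> h (- y) = - h y.
Proof. by case=> _ hZ; rewrite -mulN1r -(rmorphN1 iota) hZ scaleN1r. Qed.

Lemma klinear_scale (phi : L -> k^o) (v : V) :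
  klinear iota phi -> klinear iota (fun y => phi y *: v).
Proof.
by case=> phiD phiZ; split=> [x y|a x]; rewrite ?phiD ?phiZ ?scalerDl ?scalerA.
Qed.

End KLinear.

Section HomPair.
Variables (k L : fieldType) (iota : {rmorphism k -> L}).
Variables (V W : lmodType k) (f g : {linear V -> W}).

Lemma homPair_klinear a b (h : L -> V) : klinear iota h ->
  homPair (iota a) (iota b) f g h =1 (fun y => a *: f (h y) + b *: g (h y)).
Proof. by case=> _ hZ y; rewrite /homPair !hZ !linearZ. Qed.

Lemma homPair_iso_surjective (phi : L -> k^o) a b :
  klinear iota phi -> phi 1 = 1 -> homPair_iso iota (iota a) (iota b) f g ->
  forall w, exists v, a *: f v + b *: g v = w.
Proof.
move=> philin phi1 [_ onto] w; have [h [hlin hw]] := onto _ (klinear_scale w philin).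
by exists (h 1); rewrite -(homPair_klinear a b hlin) hw phi1 scale1r.
Qed.

Lemma homPair_iso_intertwiner (m : L) (h : L -> V) :
  homPair_iso iota 1 (- m) f g -> klinear iota h ->
  (forall y, f (h y) = g (h (m * y))) -> h 1 = 0.
Proof.
move=> [inj _] hlin fgh; apply: (inj _ _ hlin (klinear0 iota V)) => y.
by rewrite /homPair mul1r mulNr (klinearN _ hlin) linearN fgh subrr !linear0 addr0.
Qed.

End HomPair.

Theorem lemma4p1 (k : closedFieldType) (L : fieldType)
  (iota : {rmorphism k -> L}) (V W : lmodType k)
  (f g : {linear V -> W}) :
  (exists x : L, forall a : k, iota a != x) ->
  (forall lam mu : L, (lam != 0) || (mu != 0) ->
     homPair_iso iota lam mu f g) ->
  (forall v : V, v = 0) /\ (forall w : W, w = 0).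
Proof.
move=> [m m_notin] iso.
have [phi [philin phi1]] := unit_functional_exists m_notin.
have onto a b w : (a != 0) || (b != 0) -> exists v, a *: f v + b *: g v = w.
  move=> ab; apply: homPair_iso_surjective philin phi1 _ w.
  by apply: iso; rewrite !fmorph_eq0.
have g_onto w : exists v, g v = w.
  have [|v <-] := onto 0 1 w; first by rewrite oner_neq0 orbT.
  by exists v; rewrite scale0r add0r scale1r.
have /choice[s gs] : forall v, exists u, g u = f v by move=> v; exact: g_onto.
have V0 (v : V) : v = 0.
  have [||h [hlin h1 fgh]] :=
    @intertwiner_exists _ _ iota m m_notin V W f g (fun n => iter n s v).
  - by move=> n; rewrite /= gs.
  - move=> u c; have [|w <-] := onto 1 (- c) (g u); first by rewrite oner_neq0.
    by exists w; rewrite scale1r scaleNr.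
  rewrite -[LHS]h1; apply: homPair_iso_intertwiner hlin fgh.
  by apply: iso; rewrite oner_neq0.
by split=> // w; have [v <-] := g_onto w; rewrite (V0 v) linear0.
Qed.
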